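(* Let $n\ge 2$ and $I=\{0,1,\ldots,n-1\}$. Let $\tilde S_n$ be the affine permutation group with generators $\tilde s_0,\ldots,\tilde s_{n-1}$, and for $i\in I$ let $K_{\{i\}}=\langle\tilde s_j: j\in I,\ j\ne i\rangle$. Then: (1) for every $J\subseteq I$ with $|J|>1$, $(\tilde S_n,(K_{\{i\}})_{i\in J})$ is a subgroup geometry system; (2) for each $i\in I$, $K_{\{i\}}$ is isomorphic to the symmetric group $S_n$ on $\mathbb{Z}/n\mathbb{Z}$, via the map on generators $\tilde s_j\mapsto (j\ \ j+1 \bmod n)$ (the transposition of the residues $j$ and $j+1 \bmod n$); (3) for all $J,L\subseteq I$, $\langle\tilde s_i:i\in J\rangle\cap\langle\tilde s_i:i\in L\rangle=\langle\tilde s_i:i\in J\cap L\rangle$.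
   Context: $\tilde S_n$ is the group (under composition) of all bijections $u:\mathbb{Z}\to\mathbb{Z}$ with $u(j+n)=u(j)+n$ for all $j\in\mathbb{Z}$ and $\sum_{i=1}^n u(i)=\binom{n+1}{2}$; such $u$ is written $[u(1),\ldots,u(n)]$. The generators are $\tilde s_i=[1,\ldots,i-1,i+1,i,i+2,\ldots,n]$ for $1\le i\le n-1$ and $\tilde s_0=[0,2,\ldots,n-1,n+1]$. For a group $G$, a finite index set $J$ and subgroups $(K_{\{i\}})_{i\in J}$, put $K_\tau=\bigcap_{i\in\tau}K_{\{i\}}$ for $\emptyset\ne\tau\subseteq J$ and $K_\emptyset=G$. $(G,(K_{\{i\}})_{i\in J})$ is a subgroup geometry system if: (A1) for all $\tau,\tau'\subseteq J$, $K_{\tau\cap\tau'}=\langle K_\tau,K_{\tau'}\rangle$; (A2) for every $\tau\subsetneq J$ and $i\in J\setminus\tau$, $K_\tau K_{\{i\}}=\bigcap_{j\in\tau}K_{\{j\}}K_{\{i\}}$; (A3) for every $i\in J$, $K_J\ne K_{J\setminus\{i\}}$. *)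

From Stdlib Require Import ZArith.
From mathcomp Require Import all_boot all_fingroup.

Unset Strict Implicit.
Unset Printing Implicit Defensive.

Definition zset := (Z -> Z) -> Prop.

Definition zcomp (u v : Z -> Z) : Z -> Z := fun x => u (v x).
Definition idz : Z -> Z := fun x => x.

Fixpoint zsum (u : Z -> Z) (k : nat) : Z :=
  match k with
  | O => 0%Z
  | S k' => (zsum u k' + u (Z.of_nat (S k')))%Z
  end.

Definition Saff (n : nat) : zset := fun u =>
  bijective u /\
  (forall j : Z, u (j + Z.of_nat n)%Z = (u j + Z.of_nat n)%Z) /\
  zsum u n = Z.of_nat 'C(n.+1, 2).

(* The affine permutation with window [w(1),...,w(n)] (w given as a list
   w_0..w_{n-1}), extended by u(j+n) = u(j)+n. *)
Definition of_window (n : nat) (w : seq Z) : Z -> Z := fun j =>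
  (nth 0%Z w (Z.to_nat ((j - 1) mod Z.of_nat n)) +
   Z.of_nat n * ((j - 1) / Z.of_nat n))%Z.

(* Windows of the generators:
   s~_i = [1,...,i-1,i+1,i,i+2,...,n] (1 <= i <= n-1),
   s~_0 = [0,2,...,n-1,n+1]. Entry k (0-based) is u(k+1). *)
Definition sgen_window (n i : nat) : seq Z :=
  map (fun k => if i == 0 then
                  (if k == 0 then 0%Z
                   else if k == n.-1 then Z.of_nat n.+1 else Z.of_nat k.+1)
                else Z.of_nat (if k.+1 == i then i.+1
                               else if k.+1 == i.+1 then i else k.+1))
      (iota 0 n).

Definition sgen (n i : nat) : Z -> Z := of_window n (sgen_window n i).

Definition subgroup (n : nat) (H : zset) : Prop :=
  (forall u, H u -> Saff n u) /\
  H idz /\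
  (forall u v, H u -> H v -> H (zcomp u v)) /\
  (forall u, H u -> exists v, H v /\ zcomp u v = idz /\ zcomp v u = idz).

Definition gen (n : nat) (S : zset) : zset := fun u =>
  forall H, subgroup n H -> (forall s, S s -> H s) -> H u.

Definition set_eq (A B : zset) : Prop := forall u, A u <-> B u.

Definition gens (n : nat) (J : {set 'I_n}) : zset :=
  gen n (fun u => exists j : 'I_n, j \in J /\ u = sgen n j).

Definition Kpt (n : nat) (i : 'I_n) : zset := gens n [set~ i].

Definition prodset (A B : zset) : zset := fun u =>
  exists a b, A a /\ B b /\ u = zcomp a b.

Definition Ktau (n : nat) (K : 'I_n -> zset) (tau : {set 'I_n}) : zset :=
  fun u => if tau == set0 then Saff n u else forall i, i \in tau -> K i u.

(* Subgroup geometry system (S~_n, (K i)_{i in J}). In (A2), the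
   intersection over tau is taken inside G (so that it is G for tau empty). *)
Definition subgroup_geometry_system (n : nat) (K : 'I_n -> zset)
    (J : {set 'I_n}) : Prop :=
  (forall tau tau' : {set 'I_n}, tau \subset J -> tau' \subset J ->
     set_eq (Ktau n K (tau :&: tau'))
            (gen n (fun u => Ktau n K tau u \/ Ktau n K tau' u))) /\
  (forall (tau : {set 'I_n}) (i : 'I_n), tau \proper J -> i \in J ->
     i \notin tau ->
     set_eq (prodset (Ktau n K tau) (K i))
            (fun u => Saff n u /\
                      forall j, j \in tau -> prodset (K j) (K i) u)) /\
  (forall i, i \in J -> ~ set_eq (Ktau n K J) (Ktau n K (J :\ i))).

(* Given
   J, cut Z between k and k + 1 whenever k mod n is not in J; the pieces are
   the J-blocks, and s~_j with j in J only moves points inside their block.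
   The subgroup generated by the s~_j, j in J, is exactly the set of affine
   permutations mapping every integer into its own J-block. One inclusion is
   clear. For the other, a block-preserving u <> 1 has a descent
   u (x + 1) < u x with x mod n in J; then u s~_(x mod n) is again
   block-preserving while the potential sum_(y=1..n) (u y - y)^2 drops by
   2 (u x - u (x + 1)) > 0, so induction on the potential writes u as a word.

   Everything follows from this description. Intersections of parabolic
   subgroups correspond to intersections of index sets, giving (3) and (A1),
   and s~_i itself witnesses (A3). Every coset u K_{i} contains exactly one
   element increasing inside each [set~ i]-block; comparing these
   representatives gives (A2). Finally an element of K_{i} acts on every block
   {i+1+qn, ..., i+n+qn} by one and the same permutation of residues, which is
   the isomorphism of (2). *)

From Stdlib Require Import ZArith Lia FunctionalExtensionality Classical.
From mathcomp Require Import all_boot all_fingroup.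

Set Implicit Arguments.
Unset Strict Implicit.
Unset Printing Implicit Defensive.

Open Scope Z_scope.

(** * Residues and sums over a period *)

Section Residues.

Variable N : Z.
Hypothesis N_gt0 : 0 < N.

Lemma mod_addM y t : (y + N * t) mod N = y mod N.
Proof. by rewrite Z.mul_comm Z_mod_plus_full. Qed.

Lemma mod_addN y : (y + N) mod N = y mod N.
Proof. by have := mod_addM y 1; rewrite Z.mul_1_r. Qed.

Lemma eqmod_succ x y : x mod N = y mod N -> (x + 1) mod N = (y + 1) mod N.
Proof. by move=> e; rewrite -Z.add_mod_idemp_l ?e ?Z.add_mod_idemp_l //; lia. Qed.

Lemma eqmodP x y : x mod N = y mod N <-> exists t, x = y + N * t.
Proof.
split=> [e | [t ->]]; last exact: mod_addM.
exists (x / N - y / N).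
have := Z.div_mod x N; have := Z.div_mod y N; lia.
Qed.

Lemma eqmod_window a x y :
  a <= x < a + N -> a <= y < a + N -> x mod N = y mod N -> x = y.
Proof. by move=> hx hy /eqmodP [t et]; have [|[|]] := Z.lt_total t 0; nia. Qed.

Lemma eqmod_sub_r c x y : (x - c) mod N = (y - c) mod N <-> x mod N = y mod N.
Proof.
rewrite !eqmodP; split=> [[t e] | [t ->]]; exists t; lia.
Qed.

Lemma exists_window_rep a y : exists p, a <= p < a + N /\ p mod N = y mod N.
Proof.
exists (a + (y - a) mod N); have := Z.mod_pos_bound (y - a) N N_gt0.
by split; [lia | rewrite Z.add_mod_idemp_r; [congr Z.modulo; lia | lia]].
Qed.

End Residues.

Lemma mod_succ_neq N x : 2 <= N -> (x + 1) mod N <> x mod N.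
Proof.
move=> hN /(eqmodP (ltac:(lia) : 0 < N)) [t et].
by have [|[|]] := Z.lt_total t 0; nia.
Qed.

Definition qperiodic (N c : Z) (u : Z -> Z) := forall y, u (y + N) = u y + c.

Lemma qperiodic_mul N c u y t : qperiodic N c u -> u (y + N * t) = u y + c * t.
Proof.
move=> hu; elim/Z.peano_ind: t y => [|t IH|t IH] y.
- by rewrite !Z.mul_0_r !Z.add_0_r.
- by rewrite Z.mul_succ_r Z.add_assoc hu IH; lia.
- have := hu (y + N * Z.pred t).
  have -> : y + N * Z.pred t + N = y + N * t by lia.
  rewrite IH; lia.
Qed.

Lemma qperiodic_eqmod N c u x y : 0 < N -> qperiodic N c u ->
  x mod N = y mod N -> exists t, x = y + N * t /\ u x = u y + c * t.
Proof. by move=> hN hu /(eqmodP hN) [t ->]; exists t; rewrite (qperiodic_mul _ _ hu). Qed.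

Lemma zsumS f k : zsum f k.+1 = zsum f k + f (Z.of_nat k.+1).
Proof. by []. Qed.

Lemma zsum_ext f g k :
  (forall y, 1 <= y <= Z.of_nat k -> f y = g y) -> zsum f k = zsum g k.
Proof.
elim: k => [|k IH] h //; rewrite !zsumS IH => [|y hy]; last by apply: h; lia.
by rewrite h //; lia.
Qed.

Lemma zsum_upd f g k p : 1 <= p <= Z.of_nat k ->
  (forall y, 1 <= y <= Z.of_nat k -> y <> p -> f y = g y) ->
  zsum f k = zsum g k + (f p - g p).
Proof.
elim: k => [|k IH] hp h; first (simpl in hp; lia).
rewrite !zsumS.
have [ep|ne] := Z.eq_dec p (Z.of_nat k.+1).
  by subst p; rewrite (@zsum_ext f g) => [|y hy]; [lia | apply: h; lia].
rewrite IH => [||y hy hyp]; [|lia|by apply: h; lia].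
by rewrite (h (Z.of_nat k.+1)); lia.
Qed.

Lemma zsum_upd2 f g k p q : 1 <= p <= Z.of_nat k -> 1 <= q <= Z.of_nat k -> p <> q ->
  (forall y, 1 <= y <= Z.of_nat k -> y <> p -> y <> q -> f y = g y) ->
  zsum f k = zsum g k + (f p - g p) + (f q - g q).
Proof.
move=> hp hq hpq h; pose fg y := if y =? p then f p else g y.
have -> : zsum f k = zsum fg k + (f q - fg q).
  apply: zsum_upd => // y hy hyq; rewrite /fg.
  by case: Z.eqb_spec => [->|hyp] //; apply: h.
have -> : zsum fg k = zsum g k + (fg p - g p).
  by apply: zsum_upd => // y hy hyp; rewrite /fg; case: Z.eqb_spec.
by rewrite /fg Z.eqb_refl; case: Z.eqb_spec; lia.
Qed.

Lemma zsum_sub f g k : zsum (fun y => f y - g y) k = zsum f k - zsum g k.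
Proof. by elim: k => [|k IH] //; rewrite !zsumS IH; lia. Qed.

Lemma zsum_id k : zsum idz k = Z.of_nat 'C(k.+1, 2).
Proof.
elim: k => [|k IH] //; rewrite zsumS IH /idz [in RHS]binS bin1.
by rewrite -plusE Nat2Z.inj_add; lia.
Qed.

Lemma zsum_const c k : zsum (fun=> c) k = c * Z.of_nat k.
Proof. by elim: k => [|k IH] //=; rewrite ?zsumS ?IH; lia. Qed.

Lemma zsum_ge0 f k : (forall y, 0 <= f y) -> 0 <= zsum f k.
Proof. by move=> f0; elim: k => [|k IH] //; rewrite zsumS; have := f0 (Z.of_nat k.+1); lia. Qed.

Lemma measure_ind T (f : T -> Z) (P : T -> Prop) : (forall x, 0 <= f x) ->
  (forall x, (forall y, f y < f x -> P y) -> P x) -> forall x, P x.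
Proof.
move=> f0 h; apply: (Wf_nat.induction_ltof1 _ (fun x => Z.to_nat (f x))) => x IH.
by apply: h => y hy; apply: IH; rewrite /Wf_nat.ltof; have := f0 y; lia.
Qed.

Section AffinePermutations.

Variable n : nat.
Local Notation N := (Z.of_nat n).
Hypothesis n_ge2 : (2 <= n)%N.

Let N_ge2 : 2 <= N. Proof. by move/leP: n_ge2; lia. Qed.
Let N_gt0 : 0 < N. Proof. lia. Qed.

Implicit Types (J L tau : {set 'I_n}) (u v : Z -> Z).

Lemma zsum_qperiodic_upd2 g h x : qperiodic N 0 g -> qperiodic N 0 h ->
  (forall y, y mod N <> x mod N -> y mod N <> (x + 1) mod N -> g y = h y) ->
  zsum g n = zsum h n + (g x - h x) + (g (x + 1) - h (x + 1)).
Proof.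
move=> pg ph hgh.
have [p [hp px]] := exists_window_rep N_gt0 1 x.
have [q [hq qx]] := exists_window_rep N_gt0 1 (x + 1).
have at_rep y r : y mod N = r mod N -> g y - h y = g r - h r.
  move=> e; have [t [_ ->]] := qperiodic_eqmod N_gt0 pg e.
  by have [t' [_ ->]] := qperiodic_eqmod N_gt0 ph e; lia.
rewrite (at_rep x p) ?(at_rep (x + 1) q) //; apply: zsum_upd2; try lia.
- by move=> epq; apply: (@mod_succ_neq N x) => //; rewrite -qx -px epq.
- move=> y hy hyp hyq; apply: hgh => [e|e].
  + by apply: hyp; apply: (eqmod_window N_gt0 (a := 1)) => //; [lia | rewrite px].
  + by apply: hyq; apply: (eqmod_window N_gt0 (a := 1)) => //; [lia | rewrite qx].
Qed.

(** * The generators and the potential *)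

Definition sg (j y : Z) : Z :=
  if y mod N =? j then y + 1 else if (y - 1) mod N =? j then y - 1 else y.

Lemma sgenE (j : 'I_n) : sgen n j = sg (Z.of_nat j).
Proof.
apply: functional_extensionality => y; rewrite /sgen /of_window /sgen_window /sg.
have [hr hrN] := Z.mod_pos_bound (y - 1) N N_gt0.
have ey := Z.div_mod (y - 1) N ltac:(lia).
set r := (y - 1) mod N in hr hrN ey *; set q := (y - 1) / N in ey *.
have hrn : (Z.to_nat r < n)%N by apply/ltP; lia.
rewrite (nth_map 0%N) ?size_iota // nth_iota // add0n.
have -> : y mod N = if r + 1 =? N then 0 else r + 1.
  have -> : y = (r + 1) + N * q by lia.
  rewrite mod_addM //; case: Z.eqb_spec => [->|?]; first exact: Z_mod_same_full.
  by rewrite Z.mod_small; lia.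
have hj := ltn_ord j; move/ltP: hj => hj.
case: (Z.eqb_spec (r + 1) N) => ?;
  by repeat (case: eqP => ?); repeat (case: Z.eqb_spec => ?); lia.
Qed.

Lemma sgen_at (j : 'I_n) y : y mod N = Z.of_nat j -> sgen n j y = y + 1.
Proof. by rewrite sgenE /sg => ->; rewrite Z.eqb_refl. Qed.

Lemma sgen_at_succ (j : 'I_n) y : (y - 1) mod N = Z.of_nat j -> sgen n j y = y - 1.
Proof.
move=> e; rewrite sgenE /sg e Z.eqb_refl; case: Z.eqb_spec => // e'.
by case: (@mod_succ_neq N (y - 1)) => //; rewrite Z.sub_add e e'.
Qed.

Lemma sgen_off (j : 'I_n) y : y mod N <> Z.of_nat j -> (y - 1) mod N <> Z.of_nat j ->
  sgen n j y = y.
Proof. by rewrite sgenE /sg => /Z.eqb_neq -> /Z.eqb_neq ->. Qed.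

Lemma sgen_periodic (j : 'I_n) : qperiodic N N (sgen n j).
Proof.
move=> y; rewrite sgenE /sg.
have -> : y + N - 1 = y - 1 + N by lia.
rewrite !mod_addN.
by case: Z.eqb_spec => _; [|case: Z.eqb_spec]; lia.
Qed.

Lemma sgenK (j : 'I_n) : involutive (sgen n j).
Proof.
move=> y; case: (Z.eq_dec (y mod N) (Z.of_nat j)) => [e|ne].
  by rewrite (sgen_at e) sgen_at_succ; rewrite Z.add_simpl_r.
case: (Z.eq_dec ((y - 1) mod N) (Z.of_nat j)) => [e|ne'].
  by rewrite (sgen_at_succ e) (sgen_at e) Z.sub_add.
by rewrite !sgen_off.
Qed.

Lemma ord_inj_Z (j l : 'I_n) : Z.of_nat j = Z.of_nat l -> j = l.
Proof. by move=> /Nat2Z.inj e; apply: val_inj. Qed.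

Lemma ord_mod (r : 'I_n) : Z.of_nat r mod N = Z.of_nat r.
Proof. by apply: Z.mod_small; have := ltn_ord r; move/ltP; lia. Qed.

Lemma ordS_val (j : 'I_n) : Z.of_nat (ordS j) = (Z.of_nat j + 1) mod N.
Proof.
have jn := ltn_ord j; rewrite /=; case: (ltnP j.+1 n) => h.
  by rewrite modn_small // Z.mod_small; move/ltP: h; lia.
have e : j.+1 = n by apply/eqP; rewrite eqn_leq h jn.
have eZ : Z.of_nat j + 1 = N by have := f_equal Z.of_nat e; lia.
by rewrite e modnn eZ Z_mod_same_full.
Qed.

Lemma exists_ord_mod k : exists j : 'I_n, Z.of_nat j = k mod N.
Proof.
have [k0 kN] := Z.mod_pos_bound k N N_gt0.
have lt : (Z.to_nat (k mod N) < n)%N by apply/ltP; lia.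
by exists (Ordinal lt); rewrite /=; lia.
Qed.

Definition disp_sum (phi : Z -> Z) (u : Z -> Z) : Z := zsum (fun y => phi (u y - y)) n.

Lemma disp_sum_sgen phi u (j : 'I_n) x : qperiodic N N u -> x mod N = Z.of_nat j ->
  disp_sum phi (zcomp u (sgen n j)) =
  disp_sum phi u + (phi (u (x + 1) - x) - phi (u x - x))
                 + (phi (u x - (x + 1)) - phi (u (x + 1) - (x + 1))).
Proof.
move=> pu hx; rewrite /disp_sum (zsum_qperiodic_upd2 (h := fun y => phi (u y - y)) (x := x)) /zcomp.
- by rewrite (sgen_at hx) sgen_at_succ ?Z.add_simpl_r.
- by move=> y; rewrite sgen_periodic pu Z.add_0_r; congr phi; lia.
- by move=> y; rewrite pu Z.add_0_r; congr phi; lia.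
- move=> y hy hy1; rewrite sgen_off // -hx // => e.
  by apply: hy1; rewrite -(Z.sub_add 1 y) (eqmod_succ N_gt0 e).
Qed.

Lemma zsum_disp u : zsum u n = disp_sum id u + Z.of_nat 'C(n.+1, 2).
Proof. by rewrite /disp_sum zsum_sub zsum_id; lia. Qed.

Lemma Saff_id : Saff n idz.
Proof. by split; [exists idz | split; [|exact: zsum_id]]. Qed.

Lemma Saff_sgen u (j : 'I_n) : Saff n u -> Saff n (zcomp u (sgen n j)).
Proof.
move=> [bu [pu su]]; split; [|split].
- exact: bij_comp bu (inv_bij (sgenK j)).
- by move=> y; rewrite /zcomp sgen_periodic pu.
- by move: su; rewrite !zsum_disp (disp_sum_sgen _ pu (ord_mod j)) /=; lia.
Qed.

Definition potential u := disp_sum (fun z => z * z) u.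

Lemma potential_ge0 u : 0 <= potential u.
Proof. by apply: zsum_ge0 => y; apply: Z.square_nonneg. Qed.

Lemma potential_sgen u (j : 'I_n) x : qperiodic N N u -> x mod N = Z.of_nat j ->
  potential (zcomp u (sgen n j)) = potential u - 2 * (u x - u (x + 1)).
Proof. by move=> pu hx; rewrite /potential (disp_sum_sgen _ pu hx); ring. Qed.

(** * Blocks and parabolic subgroups *)

Definition res_in (J : {set 'I_n}) (k : Z) := exists2 j : 'I_n, j \in J & Z.of_nat j = k mod N.

Definition same_block J x y := forall k, x <= k < y \/ y <= k < x -> res_in J k.

Definition block_preserving J u := forall x, same_block J x (u x).

Definition parabolic J u := Saff n u /\ block_preserving J u.

Definition blockwise_increasing J u := forall x, res_in J x -> u x < u (x + 1).

Lemma res_inT k : res_in [set: 'I_n] k.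
Proof. by have [j hj] := exists_ord_mod k; exists j; rewrite ?inE. Qed.

Lemma res_in_setC1 i k : res_in [set~ i] k <-> k mod N <> Z.of_nat i.
Proof.
split=> [[j] | ne]; first by rewrite !inE => /eqP ne <- /ord_inj_Z.
have [j hj] := exists_ord_mod k; exists j; rewrite // !inE.
by apply/eqP => ji; rewrite -hj ji in ne.
Qed.

Lemma res_in_subset J L k : J \subset L -> res_in J k -> res_in L k.
Proof. by move=> /subsetP sJL [j /sJL]; exists j. Qed.

Lemma res_inI J L k : res_in J k -> res_in L k -> res_in (J :&: L) k.
Proof.
move=> [j hj ej] [l hl el]; exists j => //.
by rewrite inE hj (ord_inj_Z (etrans ej (esym el))).
Qed.

Lemma res_in_addM J k t : res_in J (k + N * t) <-> res_in J k.
Proof. by rewrite /res_in mod_addM. Qed.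

Lemma same_block_refl J x : same_block J x x.
Proof. by move=> k; lia. Qed.

Lemma same_block_sym J x y : same_block J x y -> same_block J y x.
Proof. by move=> h k hk; apply: h; lia. Qed.

Lemma same_block_trans J x y z :
  same_block J x y -> same_block J y z -> same_block J x z.
Proof.
move=> hxy hyz k hk.
by case: (Z.lt_ge_cases k y) => ?; case: (Z.lt_ge_cases k x) => ?;
  first [apply: hxy; lia | apply: hyz; lia].
Qed.

Lemma same_block_subset J L x y : J \subset L -> same_block J x y -> same_block L x y.
Proof. by move=> sJL h k /h; apply: res_in_subset. Qed.

Lemma same_block_sgen J (j : 'I_n) y : j \in J -> same_block J y (sgen n j y).
Proof.
move=> jJ; case: (Z.eq_dec (y mod N) (Z.of_nat j)) => [e|ne].
  by rewrite sgen_at // => k hk; exists j; rewrite // (_ : k = y) //; lia.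
case: (Z.eq_dec ((y - 1) mod N) (Z.of_nat j)) => [e|ne'].
  by rewrite sgen_at_succ // => k hk; exists j; rewrite // (_ : k = y - 1) //; lia.
by rewrite sgen_off //; apply: same_block_refl.
Qed.

Lemma block_preserving_comp J u v :
  block_preserving J u -> block_preserving J v -> block_preserving J (zcomp u v).
Proof. by move=> bu bv x; apply: same_block_trans (bv x) (bu (v x)). Qed.

Lemma block_preserving_sgen J (j : 'I_n) : j \in J -> block_preserving J (sgen n j).
Proof. by move=> jJ x; apply: same_block_sgen. Qed.

Lemma block_preserving_subset J L u :
  J \subset L -> block_preserving J u -> block_preserving L u.
Proof. by move=> sJL bu x; apply: same_block_subset sJL (bu x). Qed.

Lemma increasing_chain u a b : (forall k, a <= k < b -> u k < u (k + 1)) ->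
  a <= b -> u a + (b - a) <= u b.
Proof.
move=> h ab; have [m eb] : exists m : nat, b = a + Z.of_nat m by exists (Z.to_nat (b - a)); lia.
subst b; clear ab; move: h.
elim: m => [|m IH] h; first by rewrite /= Z.add_0_r; lia.
have : u a + (a + Z.of_nat m - a) <= u (a + Z.of_nat m) by apply: IH => k hk; apply: h; lia.
have : u (a + Z.of_nat m) < u (a + Z.of_nat m + 1) by apply: h; lia.
have -> : a + Z.of_nat m.+1 = a + Z.of_nat m + 1 by lia.
lia.
Qed.

Lemma increasing_periodic_translation u : qperiodic N N u ->
  (forall x, u x < u (x + 1)) -> forall y, u y = y + u 0.
Proof.
move=> pu inc.
have step x : u (x + 1) = u x + 1.
  have := increasing_chain (a := x + 1) (b := x + N) (fun k _ => inc k) ltac:(lia).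
  by rewrite pu; have := inc x; lia.
elim/Z.peano_ind => [//|y IH|y IH]; first by rewrite -Z.add_1_r step; lia.
by have := step (Z.pred y); rewrite Z.add_1_r Z.succ_pred; lia.
Qed.

Lemma increasing_Saff_id u : Saff n u -> (forall x, u x < u (x + 1)) -> u = idz.
Proof.
move=> [_ [pu su]] inc; have tu := increasing_periodic_translation pu inc.
have u00 : u 0 = 0.
  move: su; rewrite zsum_disp /disp_sum (zsum_ext (g := fun=> u 0)) => [|y _].
    by rewrite zsum_const; nia.
  by rewrite /= tu; lia.
by apply: functional_extensionality => y; rewrite tu u00 /idz; lia.
Qed.

Lemma exists_cut_around J k0 y : ~ res_in J k0 ->
  (exists2 k, y <= k & ~ res_in J k) /\ (exists2 k, k < y & ~ res_in J k).
Proof.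
move=> cut; split.
- by exists (k0 + N * Z.abs (y - k0)); [nia | rewrite res_in_addM].
- by exists (k0 + N * - (Z.abs (y - k0) + 1)); [nia | rewrite res_in_addM].
Qed.

Lemma increasing_block_id J u : block_preserving J u -> (exists k, ~ res_in J k) ->
  blockwise_increasing J u -> u = idz.
Proof.
move=> bu [k0 cut] inc; apply: functional_extensionality => y; rewrite /idz.
have [[kup yk nup] [klo ky nlo]] := exists_cut_around y cut.
(* If y < u y, induction shows that no k >= y is a cut, yet cuts recur with
   period n; symmetrically for u y < y. *)
have not_up : ~ y < u y.
  move=> yu.
  have climb (m : nat) : y + Z.of_nat m < u (y + Z.of_nat m) /\ res_in J (y + Z.of_nat m).
    elim: m => [|m [lt r]]; first by rewrite Z.add_0_r; split => //; apply: (bu y); lia.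
    have e : y + Z.of_nat m.+1 = y + Z.of_nat m + 1 by lia.
    have lt' : y + Z.of_nat m.+1 < u (y + Z.of_nat m.+1) by rewrite e; have := inc _ r; lia.
    by split => //; apply: (bu (y + Z.of_nat m.+1)); lia.
  by apply: nup; rewrite (_ : kup = y + Z.of_nat (Z.to_nat (kup - y))); [apply: (climb _).2 | lia].
have not_down : ~ u y < y.
  move=> uy.
  have descend (m : nat) : u (y - Z.of_nat m) < y - Z.of_nat m /\ res_in J (y - Z.of_nat m - 1).
    elim: m => [|m [lt r]]; first by rewrite Z.sub_0_r; split => //; apply: (bu y); lia.
    have e : y - Z.of_nat m.+1 + 1 = y - Z.of_nat m by lia.
    have lt' : u (y - Z.of_nat m.+1) < y - Z.of_nat m.+1.
      by have := inc _ r; rewrite (_ : y - Z.of_nat m - 1 = y - Z.of_nat m.+1) ?e; lia.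
    by split => //; apply: (bu (y - Z.of_nat m.+1)); lia.
  apply: nlo; rewrite (_ : klo = y - Z.of_nat (Z.to_nat (y - 1 - klo)) - 1); last lia.
  exact: (descend _).2.
lia.
Qed.

Lemma blockwise_increasing_id J u : block_preserving J u ->
  Saff n u \/ (exists k, ~ res_in J k) -> blockwise_increasing J u -> u = idz.
Proof.
move=> bu hc inc; case: (classic (exists k, ~ res_in J k)) => [cut|nocut].
  exact: increasing_block_id bu cut inc.
case: hc => [su|//]; apply: increasing_Saff_id su _ => x; apply: inc.
by apply: NNPP => nr; apply: nocut; exists x.
Qed.

Lemma exists_descent J u : injective u -> ~ blockwise_increasing J u ->
  exists2 x, res_in J x & u (x + 1) < u x.
Proof.
move=> iu ninc; apply: NNPP => nodesc; apply: ninc => x r.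
case: (Z.lt_total (u x) (u (x + 1))) => [//|[/iu|gt]]; first lia.
by case: nodesc; exists x.
Qed.

Lemma exists_descent_neq_id J u : injective u -> block_preserving J u ->
  Saff n u \/ (exists k, ~ res_in J k) -> u <> idz -> exists2 x, res_in J x & u (x + 1) < u x.
Proof. by move=> iu bu hc ne; apply: exists_descent iu _ => /(blockwise_increasing_id bu hc). Qed.

Inductive gword J : (Z -> Z) -> Prop :=
  | gword_id : gword J idz
  | gword_mul u (j : 'I_n) : gword J u -> j \in J -> gword J (zcomp u (sgen n j)).

Lemma gword_of_block_preserving J u : bijective u -> qperiodic N N u ->
  block_preserving J u -> Saff n u \/ (exists k, ~ res_in J k) -> gword J u.
Proof.
move: u; apply: (measure_ind potential_ge0) => u IH bu pu bpu hc.
case: (classic (u = idz)) => [->|ne]; first exact: gword_id.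
have [x [j jJ jx] desc] := exists_descent_neq_id (bij_inj bu) bpu hc ne.
set v := zcomp u (sgen n j).
have -> : u = zcomp v (sgen n j).
  by apply: functional_extensionality => y; rewrite /v /zcomp sgenK.
apply: gword_mul => //; apply: IH.
- by rewrite /v (potential_sgen pu (esym jx)); lia.
- exact: bij_comp bu (inv_bij (sgenK j)).
- by move=> y; rewrite /v /zcomp sgen_periodic pu.
- exact: block_preserving_comp bpu (block_preserving_sgen jJ).
- by case: hc => [su|cut]; [left; apply: Saff_sgen | right].
Qed.

Lemma gword_comp J u v : gword J u -> gword J v -> gword J (zcomp u v).
Proof. by move=> wu; elim=> [|v' j _ IH jJ] //; exact: (gword_mul IH jJ). Qed.

Lemma gword_inv J u : gword J u -> exists v, gword J v /\ zcomp u v = idz /\ zcomp v u = idz.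
Proof.
elim=> [|u' j _ [v [wv [uv vu]]] jJ]; first by exists idz; split; [exact: gword_id|].
exists (zcomp (sgen n j) v); split; first exact: gword_comp (gword_mul (gword_id J) jJ) wv.
have vK : cancel v u' by move=> y; exact: (congr1 (fun f => f y) uv).
have uK : cancel u' v by move=> y; exact: (congr1 (fun f => f y) vu).
by split; apply: functional_extensionality => y; rewrite /zcomp ?sgenK ?vK ?uK ?sgenK.
Qed.

Lemma gword_parabolic J u : gword J u -> parabolic J u.
Proof.
elim=> [|v j _ [sv bv] jJ]; first by split; [exact: Saff_id | move=> x; apply: same_block_refl].
by split; [apply: Saff_sgen | apply: block_preserving_comp bv (block_preserving_sgen jJ)].
Qed.

Lemma parabolic_gword J u : parabolic J u -> gword J u.
Proof. by move=> [[bu [pu su]] bpu]; apply: gword_of_block_preserving => //; left. Qed.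

Lemma parabolic_id J : parabolic J idz.
Proof. exact: gword_parabolic (gword_id J). Qed.

Lemma parabolic_sgen J (j : 'I_n) : j \in J -> parabolic J (sgen n j).
Proof. by move=> jJ; apply: gword_parabolic (gword_mul (gword_id J) jJ). Qed.

Lemma parabolic_comp J u v : parabolic J u -> parabolic J v -> parabolic J (zcomp u v).
Proof.
by move=> /parabolic_gword wu /parabolic_gword wv; apply: gword_parabolic (gword_comp wu wv).
Qed.

Lemma parabolic_inv J u : parabolic J u ->
  exists v, parabolic J v /\ zcomp u v = idz /\ zcomp v u = idz.
Proof.
move=> /parabolic_gword /gword_inv [v [wv uv]].
by exists v; split; [apply: gword_parabolic|].
Qed.

Lemma parabolic_subgroup J : subgroup n (parabolic J).
Proof.
split; first by move=> u [].
by split; [apply: parabolic_id | split; [apply: parabolic_comp | apply: parabolic_inv]].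
Qed.

Lemma gword_subgroup J (H : zset) u : subgroup n H ->
  (forall j : 'I_n, j \in J -> H (sgen n j)) -> gword J u -> H u.
Proof. by move=> [_ [H1 [HM _]]] HJ; elim=> [|v j _ Hv jJ] //; apply: HM (HJ j jJ). Qed.

Theorem gens_parabolic J u : gens n J u <-> parabolic J u.
Proof.
split=> [gu | /parabolic_gword wu H sH HJ].
  by apply: gu (parabolic_subgroup J) _ => s [j [jJ ->]]; apply: parabolic_sgen.
by apply: gword_subgroup sH _ wu => j jJ; apply: HJ; exists j.
Qed.

Lemma parabolic_subset J L u : J \subset L -> parabolic J u -> parabolic L u.
Proof. by move=> sJL [su bu]; split; last apply: block_preserving_subset sJL bu. Qed.

Lemma parabolicI J L u : parabolic (J :&: L) u <-> parabolic J u /\ parabolic L u.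
Proof.
split=> [pu | [[su bJ] [_ bL]]].
  by split; apply: parabolic_subset pu; rewrite ?subsetIl ?subsetIr.
by split=> // x k hk; apply: res_inI; [apply: bJ hk | apply: bL hk].
Qed.

Lemma parabolicT u : parabolic [set: 'I_n] u <-> Saff n u.
Proof. by split=> [[]|su] //; split=> // x k _; apply: res_inT. Qed.

Lemma Saff_comp u v : Saff n u -> Saff n v -> Saff n (zcomp u v).
Proof. by move=> /parabolicT su /parabolicT sv; apply/parabolicT/parabolic_comp. Qed.

Lemma gensI J L : set_eq (fun u => gens n J u /\ gens n L u) (gens n (J :&: L)).
Proof.
move=> u; rewrite /= !gens_parabolic; split; first by move=> [pJ pL]; apply/parabolicI.
by move/parabolicI.
Qed.

Lemma block_preserving_sgen_mem J (j : 'I_n) : block_preserving J (sgen n j) -> j \in J.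
Proof.
move=> /(_ (Z.of_nat j) (Z.of_nat j)); rewrite sgen_at ?ord_mod // => /(_ ltac:(lia)) [l lJ].
by rewrite ord_mod => /ord_inj_Z <-.
Qed.

Lemma Kpt_parabolic (i : 'I_n) u : Kpt n i u <-> parabolic [set~ i] u.
Proof. exact: gens_parabolic. Qed.

Lemma Ktau_parabolic tau u : Ktau n (Kpt n) tau u <-> parabolic (~: tau) u.
Proof.
rewrite /Ktau; case: eqVneq => [->|/set0Pn [i0 i0tau]]; first by rewrite setC0 parabolicT.
split=> [Ku | pu i itau]; last first.
  apply/Kpt_parabolic; apply: parabolic_subset pu.
  by apply/subsetP => j; rewrite !inE; apply: contraNneq => ->.
split; first exact: ((Kpt_parabolic i0 u).1 (Ku i0 i0tau)).1.
move=> x k hk; have [j ej] := exists_ord_mod k; exists j => //; rewrite inE; apply/negP => jtau.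
have [_ /(_ x k hk) /res_in_setC1] := (Kpt_parabolic j u).1 (Ku j jtau).
by rewrite -ej.
Qed.

Lemma KtauI tau tau' : set_eq (Ktau n (Kpt n) (tau :&: tau'))
  (gen n (fun u => Ktau n (Kpt n) tau u \/ Ktau n (Kpt n) tau' u)).
Proof.
move=> u; rewrite Ktau_parabolic setCI; split=> [/parabolic_gword wu H sH HK | gu].
  apply: gword_subgroup sH _ wu => j; rewrite inE => /orP [] jtau; apply: HK;
    [left | right]; apply/Ktau_parabolic; exact: parabolic_sgen.
apply: gu (parabolic_subgroup _) _ => v [] /Ktau_parabolic; apply: parabolic_subset.
- exact: subsetUl.
- exact: subsetUr.
Qed.

Lemma KtauD1 tau (i : 'I_n) : i \in tau ->
  ~ set_eq (Ktau n (Kpt n) tau) (Ktau n (Kpt n) (tau :\ i)).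
Proof.
move=> itau heq.
have : Ktau n (Kpt n) (tau :\ i) (sgen n i).
  by apply/Ktau_parabolic/parabolic_sgen; rewrite !inE eqxx.
by move=> /heq /Ktau_parabolic [_ /block_preserving_sgen_mem]; rewrite inE itau.
Qed.

(** * Coset representatives increasing on blocks *)

Lemma descent_res_in J u x : block_preserving J u -> u (x + 1) < u x -> res_in J x.
Proof.
move=> bu desc; case: (Z.lt_ge_cases x (u x)) => ?; first by apply: (bu x); lia.
by apply: (bu (x + 1)); lia.
Qed.

Lemma blockwise_increasing_lt L v y z : blockwise_increasing L v ->
  y < z -> same_block L y z -> v y < v z.
Proof.
move=> inc yz yLz.
have : v y + (z - y) <= v z.
  by apply: increasing_chain; [move=> k hk; apply/inc/yLz | ]; lia.
lia.
Qed.

Lemma exists_blockwise_increasing_rep J L a : parabolic J a ->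
  exists c, parabolic L c /\ parabolic J (zcomp a c) /\ blockwise_increasing L (zcomp a c).
Proof.
move: a; apply: (measure_ind potential_ge0) => a IH pa.
case: (classic (blockwise_increasing L a)) => [inc|].
  by exists idz; split; [apply: parabolic_id | split].
move=> /(exists_descent (bij_inj pa.1.1)) [x [j jL jx] desc].
have jJ : j \in J.
  have [j' j'J j'x] := descent_res_in pa.2 desc.
  by rewrite (ord_inj_Z (etrans jx (esym j'x))).
have pa' := parabolic_comp pa (parabolic_sgen jJ).
have [|c [pc [pac inc]]] := IH _ _ pa'.
  by rewrite (potential_sgen pa.1.2.1 (esym jx)); lia.
by exists (zcomp (sgen n j) c); split; first exact: parabolic_comp (parabolic_sgen jL) pc.
Qed.

Lemma blockwise_increasing_rep_unique L v c : blockwise_increasing L v ->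
  parabolic L c -> blockwise_increasing L (zcomp v c) -> c = idz.
Proof.
(* A descent of c stays inside a block, where v is increasing, so it would
   be a descent of v c. *)
move=> incv [sc bc] incvc; apply: NNPP => ne.
have [x xL desc] := exists_descent_neq_id (bij_inj sc.1) bc (or_introl sc) ne.
have xx1 : same_block L x (x + 1) by move=> k hk; rewrite (_ : k = x) //; lia.
have := blockwise_increasing_lt incv desc
  (same_block_trans (same_block_sym (bc (x + 1))) (same_block_trans (same_block_sym xx1) (bc x))).
by have := incvc x xL; rewrite /zcomp; lia.
Qed.

Lemma blockwise_increasing_parabolic J L v a d : parabolic J a -> parabolic L d ->
  v = zcomp a d -> blockwise_increasing L v -> parabolic J v.
Proof.
move=> pa pd ev incv.
have [c [pc [pac incac]]] := exists_blockwise_increasing_rep L pa.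
have [d' [pd' [dd' _]]] := parabolic_inv pd.
have d'K : cancel d' d by move=> y; exact: (congr1 (fun f => f y) dd').
have e : zcomp v (zcomp d' c) = zcomp a c.
  by rewrite ev; apply: functional_extensionality => y; rewrite /zcomp d'K.
have d'c1 : zcomp d' c = idz.
  by apply: blockwise_increasing_rep_unique incv (parabolic_comp pd' pc) _; rewrite e.
by rewrite (_ : v = zcomp a c) // -e d'c1.
Qed.

Lemma Ktau_Kpt_prod tau (i : 'I_n) :
  set_eq (prodset (Ktau n (Kpt n) tau) (Kpt n i))
    (fun u => Saff n u /\ forall j, j \in tau -> prodset (Kpt n j) (Kpt n i) u).
Proof.
move=> u; split=> [[a [b [/Ktau_parabolic pa [/Kpt_parabolic pb ->]]]] | [su hu]].
  split=> [|j jtau]; first exact: Saff_comp pa.1 pb.1.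
  exists a, b; split; last by split=> //; apply/Kpt_parabolic.
  apply/Kpt_parabolic; apply: parabolic_subset pa.
  by apply/subsetP => k; rewrite !inE; apply: contraNneq => ->.
have [c [pc [pv incv]]] := exists_blockwise_increasing_rep [set~ i] ((parabolicT u).2 su).
have [c' [pc' [cc' _]]] := parabolic_inv pc.
exists (zcomp u c), c'; split; last split; first last.
- have c'K : cancel c' c by move=> y; exact: (congr1 (fun f => f y) cc').
  by apply: functional_extensionality => y; rewrite /zcomp c'K.
- exact/Kpt_parabolic.
rewrite /Ktau; case: eqVneq => _; first exact: pv.1.
move=> j jtau; have [a [b [/Kpt_parabolic pa [/Kpt_parabolic pb eu]]]] := hu j jtau.
apply/Kpt_parabolic; apply: blockwise_increasing_parabolic pa (parabolic_comp pb pc) _ incv.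
by rewrite eu.
Qed.

(** * The action of K_{i} on residues *)

Lemma periodic_eqmod u x y : qperiodic N N u -> x mod N = y mod N -> u x mod N = u y mod N.
Proof. by move=> pu /(qperiodic_eqmod N_gt0 pu) [t [_ ->]]; rewrite mod_addM. Qed.

Lemma periodic_eqmod_inj u x y : injective u -> qperiodic N N u ->
  u x mod N = u y mod N -> x mod N = y mod N.
Proof.
move=> iu pu /(eqmodP N_gt0) [t e]; apply/(eqmodP N_gt0); exists t.
by apply: iu; rewrite (qperiodic_mul _ _ pu).
Qed.

Section ResiduePermutation.

Variable i : 'I_n.

Definition resid (x : Z) : 'I_n := insubd i (Z.to_nat (x mod N)).

Lemma resid_val x : Z.of_nat (resid x) = x mod N.
Proof.
have [x0 xN] := Z.mod_pos_bound x N N_gt0.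
by rewrite val_insubd (_ : (Z.to_nat _ < n)%N) //; [lia | apply/ltP; lia].
Qed.

Lemma resid_eqmod x y : x mod N = y mod N -> resid x = resid y.
Proof. by move=> e; apply: ord_inj_Z; rewrite !resid_val. Qed.

Lemma resid_ord (r : 'I_n) : resid (Z.of_nat r) = r.
Proof. by apply: ord_inj_Z; rewrite resid_val ord_mod. Qed.

Definition res_perm u : {perm 'I_n} :=
  if injectiveP (fun r : 'I_n => resid (u (Z.of_nat r))) is ReflectT ui then perm ui else 1%g.

Lemma res_permE u (r : 'I_n) : Saff n u -> res_perm u r = resid (u (Z.of_nat r)).
Proof.
move=> [bu [pu _]]; rewrite /res_perm; case: injectiveP => [ui|[]]; first by rewrite permE.
move=> r1 r2 /(congr1 (fun o : 'I_n => Z.of_nat o)); rewrite !resid_val.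
by move=> /(periodic_eqmod_inj (bij_inj bu) pu); rewrite !ord_mod => /ord_inj_Z.
Qed.

Lemma res_perm_morph u v (r : 'I_n) : Saff n u -> Saff n v ->
  res_perm (zcomp u v) r = res_perm u (res_perm v r).
Proof.
move=> su sv; rewrite !res_permE //; last exact: Saff_comp.
apply: resid_eqmod.
by apply: (periodic_eqmod su.2.1); rewrite resid_val Zmod_mod.
Qed.

(* The position of x in its [set~ i]-block, the blocks being the intervals
   [i + 1 + q n, i + n + q n]. *)
Definition offset (x : Z) : Z := (x - Z.of_nat i - 1) mod N.

Lemma offset_bound x : 0 <= offset x < N.
Proof. exact: Z.mod_pos_bound. Qed.

Lemma offset_eqmod x y : offset x = offset y <-> x mod N = y mod N.
Proof. by rewrite /offset -!Z.sub_add_distr; apply: eqmod_sub_r. Qed.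

Lemma offset_add x s : offset x = 0 -> 0 <= s < N -> offset (x + s) = s.
Proof.
rewrite /offset => x0 s0; rewrite (_ : x + s - _ - 1 = (x - Z.of_nat i - 1) + s); last lia.
by rewrite -Z.add_mod_idemp_l ?x0 ?Z.mod_small //; lia.
Qed.

Lemma offset_block_start x : offset (x - offset x) = 0.
Proof.
rewrite /offset (_ : x - _ - _ - 1 = (x - Z.of_nat i - 1) - (x - Z.of_nat i - 1) mod N); last lia.
by rewrite Zminus_mod Zmod_mod Z.sub_diag Z.mod_0_l; lia.
Qed.

Lemma offset_i : offset (Z.of_nat i) = N - 1.
Proof. by rewrite /offset (_ : _ - 1 = N - 1 + N * (-1)) ?mod_addM ?Z.mod_small; lia. Qed.

Lemma res_in_setC1_offset k : res_in [set~ i] k <-> offset k <> N - 1.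
Proof. by rewrite res_in_setC1 -offset_i offset_eqmod ord_mod. Qed.

Lemma same_block_offset x y :
  x - offset x <= y < x - offset x + N -> same_block [set~ i] x y.
Proof.
move=> hy k hk; apply/res_in_setC1_offset; have ob := offset_bound x.
rewrite (_ : k = x - offset x + (k - (x - offset x))); last lia.
by rewrite offset_add ?offset_block_start; lia.
Qed.

Lemma same_block_eqmod y z : same_block [set~ i] y z -> y mod N = z mod N -> y = z.
Proof.
have key a b : a < b -> same_block [set~ i] a b -> a mod N = b mod N -> False.
  move=> ab blk /(eqmodP N_gt0) [t et]; have ob := offset_bound a.
  have t1 : t <= -1 by nia.
  have /res_in_setC1_offset : res_in [set~ i] (a - offset a + (N - 1)) by apply: blk; nia.
  by rewrite offset_add ?offset_block_start; lia.
move=> blk e; case: (Z.lt_total y z) => [yz|[//|zy]]; first by case: (key y z).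
by case: (key z y) => //; apply: same_block_sym.
Qed.

Lemma res_perm_inj a b : parabolic [set~ i] a -> parabolic [set~ i] b ->
  res_perm a = res_perm b -> a = b.
Proof.
move=> [sa ba] [sb bb] e; apply: functional_extensionality => x.
apply: same_block_eqmod; first exact: same_block_trans (same_block_sym (ba x)) (bb x).
have rx : x mod N = Z.of_nat (resid x) mod N by rewrite resid_val Zmod_mod.
rewrite (periodic_eqmod sa.2.1 rx) (periodic_eqmod sb.2.1 rx) -!resid_val.
by rewrite -!res_permE // e.
Qed.

Definition lift_perm (p : {perm 'I_n}) (x : Z) : Z :=
  x - offset x + offset (Z.of_nat (p (resid x))).

Lemma lift_perm_eqmod p x : lift_perm p x mod N = Z.of_nat (p (resid x)).
Proof.
rewrite -(ord_mod (p _)); apply/offset_eqmod.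
by rewrite /lift_perm offset_add ?offset_block_start //; apply: offset_bound.
Qed.

Lemma resid_lift_perm p x : resid (lift_perm p x) = p (resid x).
Proof. by apply: ord_inj_Z; rewrite resid_val lift_perm_eqmod. Qed.

Lemma lift_permK p : cancel (lift_perm p) (lift_perm p^-1).
Proof.
move=> x; rewrite {1}/lift_perm resid_lift_perm permK.
have -> : offset (lift_perm p x) = offset (Z.of_nat (p (resid x))).
  by apply/offset_eqmod; rewrite lift_perm_eqmod ord_mod.
have -> : offset (Z.of_nat (resid x)) = offset x by apply/offset_eqmod; rewrite resid_val Zmod_mod.
by rewrite /lift_perm; lia.
Qed.

Lemma parabolic_lift_perm p : parabolic [set~ i] (lift_perm p).
Proof.
apply/gword_parabolic/gword_of_block_preserving.
- by exists (lift_perm p^-1); [apply: lift_permK | rewrite -{2}(invgK p); apply: lift_permK].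
- move=> x; rewrite /lift_perm (resid_eqmod (mod_addN N x)).
  have -> : offset (x + N) = offset x by apply/offset_eqmod/mod_addN.
  lia.
- move=> x; apply: same_block_offset; rewrite /lift_perm.
  by have := offset_bound (Z.of_nat (p (resid x))); lia.
- by right; exists (Z.of_nat i); rewrite res_in_setC1 ord_mod.
Qed.

Lemma res_perm_lift p : res_perm (lift_perm p) = p.
Proof.
apply/permP => r; rewrite res_permE ?resid_lift_perm ?resid_ord //.
exact: (parabolic_lift_perm p).1.
Qed.

Lemma res_perm_sgen (j : 'I_n) : res_perm (sgen n j) = tperm j (ordS j).
Proof.
apply/permP => r; rewrite res_permE; last exact: (parabolic_sgen (in_setT j)).1.
have jS : (Z.of_nat (ordS j) - 1) mod N = Z.of_nat j.
  by rewrite ordS_val Zminus_mod_idemp_l Z.add_simpl_r ord_mod.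
case: tpermP => [->|->|rj rS].
- by apply: ord_inj_Z; rewrite sgen_at ?ord_mod // resid_val ordS_val.
- by apply: ord_inj_Z; rewrite sgen_at_succ // resid_val.
- rewrite sgen_off ?resid_ord //; first by rewrite ord_mod => /ord_inj_Z.
  move=> e; apply: rS; apply: ord_inj_Z.
  by rewrite ordS_val -e Z.add_mod_idemp_l ?Z.sub_add ?ord_mod; lia.
Qed.

End ResiduePermutation.

End AffinePermutations.

Close Scope Z_scope.

Theorem mainTheorem4 (n : nat) (hn : 2 <= n) :
  (* (1) *)
  (forall J : {set 'I_n}, 1 < #|J| ->
     subgroup_geometry_system n (Kpt n) J) /\
  (* (2) K_{i} is isomorphic to Sym(Z/nZ) via s~_j |-> (j  j+1 mod n) *)
  (forall i : 'I_n,
     exists phi : (Z -> Z) -> {perm 'I_n},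
       (forall a b, Kpt n i a -> Kpt n i b ->
          forall x, phi (zcomp a b) x = phi a (phi b x)) /\
       (forall a b, Kpt n i a -> Kpt n i b -> phi a = phi b -> a = b) /\
       (forall p : {perm 'I_n}, exists a, Kpt n i a /\ phi a = p) /\
       (forall j : 'I_n, j != i -> phi (sgen n j) = tperm j (ordS j))) /\
  (* (3) *)
  (forall J L : {set 'I_n},
     set_eq (fun u => gens n J u /\ gens n L u) (gens n (J :&: L))).
Proof.
split; [|split]; last exact: gensI.
- move=> J _; split; [|split].
  + by move=> tau tau' _ _; apply: KtauI.
  + by move=> tau i _ _ _; apply: Ktau_Kpt_prod.
  + by move=> i iJ; apply: KtauD1.
- move=> i; exists (res_perm i); split; [|split; [|split]].
  + by move=> a b /(Kpt_parabolic hn) [sa _] /(Kpt_parabolic hn) [sb _] x; apply: res_perm_morph.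
  + by move=> a b /(Kpt_parabolic hn) pa /(Kpt_parabolic hn) pb; apply: res_perm_inj.
  + move=> p; exists (lift_perm i p); split; last exact: res_perm_lift.
    exact/(Kpt_parabolic hn)/parabolic_lift_perm.
  + by move=> j _; apply: res_perm_sgen.
Qed.
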